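(* Let $N$ be a non-trivial Abelian group, $Q$ an infinite group, and $\alpha\colon Q\to \mathrm{Aut}(N)$ a homomorphism whose action is free outside $0$, i.e. if $q\in Q$ and $n\in N\setminus\{0\}$ satisfy $\alpha(q)(n)=n$ then $q=1$. Let $\Gamma=N\rtimes_\alpha Q$ and suppose $\Gamma$ is finitely generated. Then $N$ is infinite and the extension $0\to N\to\Gamma\to Q\to 1$ is acentral (i.e. $N$ is an acentral subgroup of $\Gamma$). In particular, $\Gamma$ is not presentable by a product.
   Context: A subgroup $A$ of a group $\Gamma$ is called acentral if for every $g\in A\setminus\{1\}$ the centraliser $C_\Gamma(g)$ is contained in $A$; an extension $1\to N\to\Gamma\to Q\to 1$ is acentral if $N$ is acentral in $\Gamma$. An infinite group $\Gamma$ is not presentable by a product if for every homomorphism $\varphi\colon \Gamma_1\times\Gamma_2\to\Gamma$ whose image has finite index in $\Gamma$, at least one of $\varphi(\Gamma_1)$, $\varphi(\Gamma_2)$ is finite. *)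

From HB Require Import structures.
From Stdlib Require List.
From mathcomp Require Import all_boot all_algebra.
Set Implicit Arguments. Unset Strict Implicit. Unset Printing Implicit Defensive.
Import GRing.Theory.
Local Open Scope ring_scope.

Record Grp := {
  gcar :> Type;
  gmul : gcar -> gcar -> gcar;
  gone : gcar;
  ginv : gcar -> gcar;
  gmulA : forall x y z, gmul x (gmul y z) = gmul (gmul x y) z;
  gmul1 : forall x, gmul gone x = x;
  gmulV : forall x, gmul (ginv x) x = gone }.

Definition finite_set (T : Type) (A : T -> Prop) : Prop :=
  exists s : list T, forall x, A x -> List.In x s.
Definition infinite_type (T : Type) : Prop := ~ finite_set (fun _ : T => True).

Definition is_subgroup (G : Grp) (H : G -> Prop) : Prop :=
  H (gone G) /\ (forall x y, H x -> H y -> H (@gmul G x y)) /\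
  (forall x, H x -> H (@ginv G x)).
Definition generated (G : Grp) (S : G -> Prop) (x : G) : Prop :=
  forall H : G -> Prop, is_subgroup H -> (forall s, S s -> H s) -> H x.
Definition finitely_generated (G : Grp) : Prop :=
  exists s : list G, forall x, generated (fun y => List.In y s) x.

Definition acentral (G : Grp) (A : G -> Prop) : Prop :=
  is_subgroup A /\
  forall g, A g -> g <> gone G ->
    forall h, @gmul G h g = @gmul G g h -> A h.

Definition finite_index (G : Grp) (H : G -> Prop) : Prop :=
  exists s : list G, forall x, exists t h, List.In t s /\ H h /\ x = @gmul G t h.

Definition not_presentable_by_product (G : Grp) : Prop :=
  infinite_type G /\
  forall (G1 G2 : Grp) (phi : G1 -> G2 -> G),
    (forall a1 a2 b1 b2,
        phi (@gmul G1 a1 a2) (@gmul G2 b1 b2) = @gmul G (phi a1 b1) (phi a2 b2)) ->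
    finite_index (fun g => exists a b, g = phi a b) ->
    finite_set (fun g => exists a, g = phi a (gone G2)) \/
    finite_set (fun g => exists b, g = phi (gone G1) b).

Definition aut_action (N : zmodType) (Q : Grp) (act : Q -> N -> N) : Prop :=
  (forall q, {morph act q : x y / x + y}) /\
  (forall q, bijective (act q)) /\
  (forall q1 q2 n, act (@gmul Q q1 q2) n = act q1 (act q2 n)).

Section SD.
Variables (N : zmodType) (Q : Grp) (act : Q -> N -> N).
Hypothesis Ha : aut_action act.

Definition sd_mul (x y : N * Q) : N * Q :=
  (x.1 + act x.2 y.1, @gmul Q x.2 y.2).
Definition sd_one : N * Q := (0, gone Q).
Definition sd_inv (x : N * Q) : N * Q :=
  (- act (@ginv Q x.2) x.1, @ginv Q x.2).

Lemma act1 n : act (gone Q) n = n.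
Proof.
case: Ha => _ [Hb Hm]. case: (Hb (gone Q)) => g K1 _.
apply: (can_inj K1); by rewrite -Hm gmul1.
Qed.

Lemma sd_mulA x y z : sd_mul x (sd_mul y z) = sd_mul (sd_mul x y) z.
Proof.
case: Ha => Hd [_ Hm]; rewrite /sd_mul /= Hd Hm addrA gmulA //.
Qed.

Lemma sd_mul1 x : sd_mul sd_one x = x.
Proof. by case: x => n q; rewrite /sd_mul /= act1 add0r gmul1. Qed.

Lemma sd_mulV x : sd_mul (sd_inv x) x = sd_one.
Proof. by case: x => n q; rewrite /sd_mul /= addNr gmulV. Qed.

Definition sdprod : Grp :=
  Build_Grp sd_mulA sd_mul1 sd_mulV.
End SD.

From mathcomp Require Import all_boot all_algebra.
From Stdlib Require Import Classical.
Import GRing.Theory.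
Set Implicit Arguments. Unset Strict Implicit. Unset Printing Implicit Defensive.
Local Open Scope ring_scope.

(** Freeness of the action puts the centraliser of every nontrivial element of
    the base [N] inside [N], so [N] is acentral; the orbit map of a nonzero
    element embeds the infinite group [Q] into [N], and [Q] is the quotient by
    [N], so [N] is infinite and of infinite index.

    An infinite acentral subgroup [A] of infinite index obstructs products:
    given commuting factors [phi(G1)], [phi(G2)] with image of finite index,
    if one factor meets [A] nontrivially then commuting with it pushes the other
    infinite factor, and then everything, into [A], contradicting the index;
    otherwise [A] meets the finite-index image trivially, hence injects into a
    finite set of cosets and is finite. *)

Section GroupTheory.
Variable G : Grp.
Local Notation "x * y" := (@gmul G x y).
Local Notation "1" := (gone G).

Lemma grp_mulgV (x : G) : x * ginv x = 1.
Proof.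
rewrite -[x * ginv x]gmul1 -{1}(gmulV (ginv x)).
by rewrite -gmulA (gmulA (ginv x)) gmulV gmul1 gmulV.
Qed.

Lemma grp_mulg1 (x : G) : x * 1 = x.
Proof. by rewrite -(gmulV x) gmulA grp_mulgV gmul1. Qed.

Lemma grp_mulKg (x y : G) : ginv x * (x * y) = y.
Proof. by rewrite gmulA gmulV gmul1. Qed.

Lemma grp_mulgI (z : G) : injective (@gmul G z).
Proof. by move=> x y /(f_equal (@gmul G (ginv z))); rewrite !grp_mulKg. Qed.

Lemma grp_inv_uniq (x y : G) : y * x = 1 -> y = ginv x.
Proof. by move=> yx1; rewrite -[y]grp_mulg1 -(grp_mulgV x) gmulA yx1 gmul1. Qed.

Lemma grp_eq_mulVg1 (x y : G) : ginv x * y = 1 -> x = y.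
Proof. by move=> xy1; rewrite -[y]gmul1 -(grp_mulgV x) -gmulA xy1 grp_mulg1. Qed.

Lemma grp_invg1 : ginv 1 = 1.
Proof. by symmetry; apply: grp_inv_uniq; rewrite gmul1. Qed.

Lemma grp_invMg (x y : G) : ginv (x * y) = ginv y * ginv x.
Proof.
by symmetry; apply: grp_inv_uniq; rewrite -gmulA (gmulA (ginv x)) gmulV gmul1 gmulV.
Qed.

End GroupTheory.

Lemma finite_set_sub (T : Type) (A B : T -> Prop) :
  (forall x, A x -> B x) -> finite_set B -> finite_set A.
Proof. by move=> AB [s Bs]; exists s => x /AB /Bs. Qed.

Lemma finite_set_image (T U : Type) (f : T -> U) (A : T -> Prop) :
  finite_set A -> (forall y, exists x, A x /\ f x = y) ->
  finite_set (fun _ : U => True).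
Proof.
move=> [s As] onto; exists (List.map f s) => y _.
by have [x [Ax <-]] := onto y; apply: List.in_map; apply: As.
Qed.

(* [R x u] reads "[u] is a label of [x]"; a label is carried by at most one
   element of [P]. *)
Lemma finite_set_labelled (T U : Type) (P : T -> Prop) (R : T -> U -> Prop)
    (s : list U) :
  (forall x y u, P x -> P y -> R x u -> R y u -> x = y) ->
  finite_set (fun x => P x /\ exists u, List.In u s /\ R x u).
Proof.
move=> label_uniq; elim: s => [|u s [l Hl]].
  by exists nil => x [_ [u [[] _]]].
have [[x0 [Px0 Rx0]]|noRu] := classic (exists x, P x /\ R x u).
  exists (x0 :: l) => x [Px [v [[<-|sv] Rxv]]].
    by left; apply: label_uniq Px0 Px Rx0 Rxv.
  by right; apply: Hl; split => //; exists v.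
exists l => x [Px [v [[<-|sv] Rxv]]].
  by case: noRu; exists x.
by apply: Hl; split => //; exists v.
Qed.

Lemma finite_set_inj (T U : Type) (f : T -> U) :
  injective f -> finite_set (fun _ : U => True) -> finite_set (fun _ : T => True).
Proof.
move=> f_inj [s sU].
have [l Hl] := @finite_set_labelled T U (fun _ => True) (fun x u => f x = u) s
  (fun x y u _ _ fx fy => f_inj x y (etrans fx (esym fy))).
by exists l => x _; apply: Hl; split => //; exists (f x); split => //; apply: sU.
Qed.

Lemma infinite_set_neq (T : Type) (x0 : T) (P : T -> Prop) :
  ~ finite_set P -> exists x, P x /\ x <> x0.
Proof.
move=> infP; apply: NNPP => noP; apply: infP; exists (x0 :: nil) => x Px.
by left; apply: NNPP => nx; apply: noP; exists x; split => // xx0; apply: nx.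
Qed.

Lemma finite_index_sub (G : Grp) (H K : G -> Prop) :
  (forall x, H x -> K x) -> finite_index H -> finite_index K.
Proof.
move=> HK [s Hs]; exists s => x.
by have [t [h [st [Hh ->]]]] := Hs x; exists t, h; split; [|split; [apply: HK|]].
Qed.

(* Two elements of [A] in the same coset [t H] differ by an element of [A ∩ H]. *)
Lemma finite_set_trivial_meet_finite_index (G : Grp) (A H : G -> Prop) :
  is_subgroup A -> is_subgroup H -> finite_index H ->
  (forall x, A x -> H x -> x = gone G) -> finite_set A.
Proof.
move=> [_ [AM AV]] [_ [HM HV]] [s Hs] meet1.
pose R x t := exists h, H h /\ x = @gmul G t h.
have coset_uniq x y t : A x -> A y -> R x t -> R y t -> x = y.
  move=> Ax Ay [h [Hh ex]] [h' [Hh' ey]]; subst x y.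
  have quotient_eq : @gmul G (ginv (@gmul G t h)) (@gmul G t h') = @gmul G (ginv h) h'.
    by rewrite grp_invMg -gmulA grp_mulKg.
  have := meet1 _ (AM _ _ (AV _ Ax) Ay).
  by rewrite quotient_eq => /(_ (HM _ _ (HV _ Hh) Hh')) /grp_eq_mulVg1 ->.
have [l Hl] := finite_set_labelled s coset_uniq.
exists l => x Ax; apply: Hl; split => //.
by have [t [h [st [Hh ->]]]] := Hs x; exists t; split => //; exists h.
Qed.

Section ProductHomomorphism.
Variables (G G1 G2 : Grp) (phi : G1 -> G2 -> G).
Hypothesis phiM : forall a1 a2 b1 b2,
  phi (@gmul G1 a1 a2) (@gmul G2 b1 b2) = @gmul G (phi a1 b1) (phi a2 b2).
Local Notation "x * y" := (@gmul G x y).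

Lemma prod_hom1 : phi (gone G1) (gone G2) = gone G.
Proof.
apply: (@grp_mulgI G (phi (gone G1) (gone G2))).
by rewrite -phiM !gmul1 grp_mulg1.
Qed.

Lemma prod_hom_split a b : phi a b = phi a (gone G2) * phi (gone G1) b.
Proof. by rewrite -phiM grp_mulg1 gmul1. Qed.

Lemma prod_hom_commute a b :
  phi a (gone G2) * phi (gone G1) b = phi (gone G1) b * phi a (gone G2).
Proof. by rewrite -!phiM !grp_mulg1 !gmul1. Qed.

Lemma prod_hom_inv a b : ginv (phi a b) = phi (ginv a) (ginv b).
Proof. by symmetry; apply: grp_inv_uniq; rewrite -phiM !gmulV prod_hom1. Qed.

Lemma prod_hom_image_subgroup : is_subgroup (fun g => exists a b, g = phi a b).
Proof.
split; first by exists (gone G1), (gone G2); rewrite prod_hom1.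
split; first by move=> _ _ [a [b ->]] [a' [b' ->]]; exists (@gmul G1 a a'), (@gmul G2 b b').
by move=> _ [a [b ->]]; exists (ginv a), (ginv b); rewrite prod_hom_inv.
Qed.

Variable A : G -> Prop.
Hypothesis A_acentral : acentral A.

Lemma acentral_prod_hom_image a b :
  A (phi a (gone G2)) -> phi a (gone G2) <> gone G -> phi (gone G1) b <> gone G ->
  forall a' b', A (phi a' b').
Proof.
case: A_acentral => [[_ [AM _]] centA] Aa a_neq1 b_neq1 a' b'.
have Ab : A (phi (gone G1) b) by apply: centA Aa a_neq1 _ _; rewrite prod_hom_commute.
rewrite prod_hom_split; apply: AM.
  by apply: centA Ab b_neq1 _ _; rewrite prod_hom_commute.
by apply: centA Aa a_neq1 _ _; rewrite prod_hom_commute.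
Qed.

Lemma acentral_meet_prod_hom_image :
  (forall a, A (phi a (gone G2)) -> phi a (gone G2) = gone G) ->
  (forall b, A (phi (gone G1) b) -> phi (gone G1) b = gone G) ->
  forall a b, A (phi a b) -> phi a b = gone G.
Proof.
case: A_acentral => _ centA meet1 meet2 a b Aab; apply: NNPP => ab_neq1.
have a1 : phi a (gone G2) = gone G.
  apply: meet1; apply: centA Aab ab_neq1 _ _.
  by rewrite [phi a b]prod_hom_split -gmulA -prod_hom_commute.
have Ab : A (phi (gone G1) b) by rewrite -[phi _ b]gmul1 -a1 -prod_hom_split.
by apply: ab_neq1; rewrite prod_hom_split a1 gmul1 meet2.
Qed.

End ProductHomomorphism.

Theorem acentral_not_presentable_by_product (G : Grp) (A : G -> Prop) :
  acentral A -> ~ finite_set A -> ~ finite_index A -> not_presentable_by_product G.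
Proof.
move=> A_acentral A_infinite A_infinite_index.
split=> [G_finite|G1 G2 phi phiM image_finite_index].
  by apply: A_infinite; apply: finite_set_sub G_finite.
apply: NNPP => /not_or_and [G1_infinite G2_infinite].
have image_notin_A : ~ forall a b, A (phi a b).
  move=> imA; apply: A_infinite_index; apply: (finite_index_sub _ image_finite_index).
  by move=> _ [a [b ->]].
have meet1 a : A (phi a (gone G2)) -> phi a (gone G2) = gone G.
  move=> Aa; apply: NNPP => a_neq1; apply: image_notin_A.
  have [_ [[b ->] b_neq1]] := infinite_set_neq (gone G) G2_infinite.
  exact: acentral_prod_hom_image Aa a_neq1 b_neq1.
have meet2 b : A (phi (gone G1) b) -> phi (gone G1) b = gone G.
  move=> Ab; apply: NNPP => b_neq1; apply: image_notin_A => a' b'.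
  have [_ [[a ->] a_neq1]] := infinite_set_neq (gone G) G1_infinite.
  have phiM_swap b1 b2 a1 a2 := phiM a1 a2 b1 b2.
  exact: (acentral_prod_hom_image (phi := fun b a => phi a b)) phiM_swap _ A_acentral
    _ _ Ab b_neq1 a_neq1 b' a'.
apply: A_infinite; apply: (finite_set_trivial_meet_finite_index _ _ image_finite_index).
- by case: A_acentral.
- exact: prod_hom_image_subgroup.
- move=> x Ax [a [b ex]]; rewrite ex in Ax *.
  exact: (acentral_meet_prod_hom_image phiM A_acentral meet1 meet2).
Qed.

Section SemidirectProduct.
Variables (N : zmodType) (Q : Grp) (act : Q -> N -> N).
Hypothesis act_aut : aut_action act.
Hypothesis act_free : forall q n, n != 0 -> act q n = n -> q = gone Q.

Definition sd_base (g : sdprod act_aut) : Prop := g.2 = gone Q.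

Lemma orbit_map_inj (n : N) : n != 0 -> injective (fun q => act q n).
Proof.
case: act_aut => _ [_ actM] n_neq0 x y /= eq_xy.
apply/esym/grp_eq_mulVg1/(act_free n_neq0).
by rewrite actM eq_xy -actM gmulV (act1 act_aut).
Qed.

Lemma sd_base_subgroup : is_subgroup sd_base.
Proof.
split=> //; split=> [[n q] [m r]|[n q]]; rewrite /sd_base /=.
  by move=> -> ->; apply: gmul1.
by move=> ->; apply: grp_invg1.
Qed.

Lemma sd_base_acentral : acentral sd_base.
Proof.
split; first exact: sd_base_subgroup.
move=> [n q]; rewrite /sd_base /= => q1 ng [m r]; rewrite q1 /sd_mul /=.
move=> /(f_equal fst) /=; rewrite (act1 act_aut) addrC => /addIr act_rn.
apply: act_free act_rn; apply/eqP => n0; by apply: ng; rewrite q1 n0.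
Qed.

Lemma sd_base_infinite_index : infinite_type Q -> ~ finite_index sd_base.
Proof.
move=> Q_infinite [s Hs]; apply: Q_infinite.
apply: (@finite_set_image _ _ snd (fun t => List.In t s)); first by exists s.
move=> q; have [t [h [st [base_h /(f_equal snd)]]]] := Hs (0, q).
by rewrite /= base_h grp_mulg1 => ->; exists t.
Qed.

Lemma sd_base_infinite : infinite_type N -> ~ finite_set sd_base.
Proof.
move=> N_infinite base_finite; apply: N_infinite.
by apply: (@finite_set_image (sdprod act_aut) _ fst _ base_finite) => n; exists (n, gone Q).
Qed.

End SemidirectProduct.

Theorem corollary3p5 (N : zmodType) (Q : Grp) (act : Q -> N -> N)
    (Ha : aut_action act) :
  (exists n : N, n != 0) ->
  infinite_type Q ->
  (forall (q : Q) (n : N), n != 0 -> act q n = n -> q = gone Q) ->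
  finitely_generated (sdprod Ha) ->
  infinite_type N /\
  acentral (G := sdprod Ha) (fun g => g.2 = gone Q) /\
  not_presentable_by_product (sdprod Ha).
Proof.
move=> [n n_neq0] Q_infinite act_free _.
have N_infinite : infinite_type N.
  by move=> /(finite_set_inj (orbit_map_inj Ha act_free n_neq0)).
have base_acentral := sd_base_acentral Ha act_free.
split=> //; split=> //.
apply: (acentral_not_presentable_by_product base_acentral).
  exact: sd_base_infinite.
exact: sd_base_infinite_index.
Qed.
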